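(* Let $1<\chi\le\rho$ and let $G$ be a $(\rho,\chi)$-bidding profile. Then for every $T>0$, \[ \tau(T):=\sup\{t\in\mathbb{R}:G(t)<T\}<\infty \quad\text{and}\quad \mathrm{cost}_G(T)=\int_{-\infty}^{\tau(T)+1}G(t)\,\mathrm{d} t . \]
   Context: Online bidding with target $T>0$: a bidder submits increasing positive bids until one is $\ge T$; the cost is the sum of bids up to and including the first bid $\ge T$. Given $1<\chi\le\rho$, a $(\rho,\chi)$-bidding profile is a non-decreasing, left-continuous function $G:\mathbb{R}\to(0,\infty)$ such that (offset) $G(x)<1$ for all $x<0$ and $G(x)\ge 1$ for all $x>0$; (robustness) $\int_{-\infty}^{x+1}G(t)\,\mathrm{d} t\le \rho\,G(x)$ for all $x\in\mathbb{R}$; (consistency) $\int_{-\infty}^{1}G(t)\,\mathrm{d} t\le\chi$. The strategy driven by $G$ is the random bi-infinite bid sequence $(G(n+U))_{n\in\mathbb{Z}}$, where $U\sim\mathrm{Unif}(0,1]$ is a single random variable shared by all $n$; its cost on target $T$ is $\sum_{n\le n_*}G(n+U)$ with $n_*=\min\{n: G(n+U)\ge T\}$, and $\mathrm{cost}_G(T)$ denotes the expectation of this cost over $U$. *)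

From HB Require Import structures.
From mathcomp Require Import all_boot all_order all_algebra.
From mathcomp Require Import all_classical all_reals all_analysis.
Set Implicit Arguments. Unset Strict Implicit. Unset Printing Implicit Defensive.
Import Order.TTheory GRing.Theory Num.Theory.
Import numFieldNormedType.Exports.
Local Open Scope classical_set_scope.
Local Open Scope ring_scope.

Definition bidding_profile (R : realType) (rho chi : R) (G : R -> R) : Prop :=
  (forall x, 0 < G x) /\
  {homo G : x y / x <= y} /\
  (forall x, G t @[t --> x^'-] --> G x) /\
  (forall x, x < 0 -> G x < 1) /\
  (forall x, 0 < x -> 1 <= G x) /\
      (forall x : R, (\int[@lebesgue_measure R]_(t in `]-oo, (x + 1)%R]) (G t)%:E
                   <= (rho * G x)%:E)%E) /\
  (\int[@lebesgue_measure R]_(t in `]-oo, 1%R]) (G t)%:E <= chi%:E)%E.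

Definition first_hit (R : realType) (G : R -> R) (T u : R) (n : int) : Prop :=
  T <= G (n%:~R + u) /\ forall m : int, (m < n)%R -> G (m%:~R + u) < T.

Definition run_cost (R : realType) (G : R -> R) (T u : R) : \bar R :=
  (\esum_(n in [set n : int | exists ns, first_hit G T u ns /\ (n <= ns)%R])
     (G (n%:~R + u))%:E)%E.

(* expected cost over U ~ Unif(0,1] *)
Definition cost (R : realType) (G : R -> R) (T : R) : \bar R :=
  (\int[@lebesgue_measure R]_(u in `]0%R, 1%R]) run_cost G T u)%E.

From HB Require Import structures.
From mathcomp Require Import all_boot all_order all_algebra.
From mathcomp Require Import all_classical all_reals all_analysis.
From mathcomp Require Import measurable_realfun ring lra.
Set Implicit Arguments. Unset Strict Implicit. Unset Printing Implicit Defensive.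
Import Order.TTheory GRing.Theory Num.Theory.
Local Open Scope classical_set_scope.
Local Open Scope ring_scope.

(* Let E := [set t | G t < T] and tau := sup E.  Consistency makes E nonempty
   and robustness with G >= 1 on ]0, +oo[ gives x + 1 <= rho * G x for x >= 0,
   so E is bounded by rho * T.
   As G is nondecreasing, G < T left of tau and G >= T right of tau; hence, for
   every offset u in ]0, 1] but one, the bids paid on target T are the G (n + u)
   with n + u <= tau + 1.  Averaging over u and using that the translates of
   ]0, 1] by the integers tile the line gives the integral of G up to tau + 1. *)

Section lebesgue_translates.
Context {R : realType}.
Local Notation mu := (@lebesgue_measure R).

Let measurable_addr (b : R) :
  measurable_fun [set: measurableTypeR R] (+%R b : _ -> measurableTypeR R).
Proof. by apply: nondecreasing_measurable => // x y xy; rewrite lerD2l. Qed.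

Lemma lebesgue_measure_shift (b : R) (A : set R) : measurable A ->
  pushforward mu (+%R b : _ -> measurableTypeR R) A = mu A.
Proof.
move=> mA; apply/esym/lebesgue_measure_unique => //= _ [[x y] _ <-].
rewrite /pushforward.
have -> : +%R b @^-1` `]x, y] = `]x - b, y - b]%classic.
  by apply/seteqP; split => u /=; rewrite !in_itv /= ltrBlDl lerBrDl.
rewrite !lebesgue_measure_itv /= !lte_fin ltrBrDr subrK; case: ifP => // _.
by rewrite -EFinD; congr (_%:E); lra.
Qed.

Lemma ge0_integral_ocitv_shift (f : R -> \bar R) (b x y : R) :
  measurable_fun setT f -> (forall t, (0 <= f t)%E) ->
  (\int[mu]_(u in `]x, y]) f (b + u)%R = \int[mu]_(t in `](b + x)%R, (b + y)%R]) f t)%E.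
Proof.
move=> mf f0.
have -> : `]x, y]%classic =
    (+%R b : _ -> measurableTypeR R) @^-1` `](b + x)%R, (b + y)%R].
  by apply/seteqP; split => u /=; rewrite !in_itv /= ltrD2l lerD2l.
rewrite -(ge0_integral_pushforward (measurable_addr b)) //; last first.
  exact: measurable_funS mf.
by apply: eq_measure_integral => A mA _; exact: lebesgue_measure_shift.
Qed.

Lemma esum_int_le_nneseries (f : int -> \bar R) (a : int) :
  (forall n, (0 <= f n)%E) ->
  (\esum_(n in [set n : int | (n <= a)%R]) f n = \sum_(k <oo) f (a - k%:Z)%R)%E.
Proof.
move=> f0; rewrite (@reindex_esum _ _ _ setT _ (fun k : nat => a - k%:Z)).
  by rewrite nneseries_esumT.
split=> [k _ /=|k j _ _ /= /addrI/oppr_inj []|n /= na] //; first by rewrite gerBl.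
by exists (absz (a - n)%R) => //; rewrite gez0_abs ?subr_ge0 // subKr.
Qed.

Lemma ge0_integral_itvNy_int (h : R -> \bar R) (a : int) :
  measurable_fun setT h -> (forall t, (0 <= h t)%E) ->
  (\int[mu]_(t in `]-oo, (a + 1)%:~R]) h t =
   \sum_(k <oo) \int[mu]_(t in `](a - k%:Z)%:~R, (a - k%:Z + 1)%:~R]) h t)%E.
Proof.
move=> mh h0.
have halfline_cover : `]-oo, (a + 1)%:~R]%classic =
    \bigcup_k `](a - k%:Z)%:~R, (a - k%:Z + 1)%:~R]%classic :> set R.
  apply/seteqP; split => t /=; rewrite ?in_itv /=.
    move=> ta; have ca : Num.ceil t <= a + 1 by rewrite ceil_le_int.
    exists (absz (a + 1 - Num.ceil t)%R) => //=.
    rewrite gez0_abs ?subr_ge0 //.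
    have -> : a - (a + 1 - Num.ceil t) = Num.ceil t - 1 by ring.
    by rewrite subrK in_itv; exact: ceil_itv.
  move=> [k _ /=]; rewrite in_itv /= => /andP[_ tk]; apply: (le_trans tk).
  by rewrite ler_int lerD2r gerBl.
rewrite halfline_cover ge0_integral_bigcup //.
- by rewrite -halfline_cover; exact: measurable_funS mh.
- move=> i j _ _ [t [/=]]; rewrite !in_itv /= => ti tj.
  have ceil_t k : (a - k%:Z)%:~R < t <= (a - k%:Z + 1)%:~R ->
      Num.ceil t = a - k%:Z + 1.
    by move=> tk; apply: ceil_def; rewrite addrK.
  by move: (ceil_t _ ti); rewrite (ceil_t _ tj) => /addIr/addrI/oppr_inj [].
Qed.

Lemma eq_integral_setD1 (f g : R -> \bar R) (r : R) (D : set R) :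
  measurable D -> measurable_fun D g -> {in D `\ r, f =1 g} ->
  (\int[mu]_(x in D) f x = \int[mu]_(x in D) g x)%E.
Proof.
move=> mD mg fg; have mDr : measurable (D `\ r) by exact: measurableD.
have mgr : measurable_fun (D `\ r) g by exact: measurable_funS mg.
rewrite -(integral_setD1 mDr mgr) -(integral_setD1 mDr); first exact: eq_integral.
by apply: eq_measurable_fun mgr => x /fg ->.
Qed.

Section int_translates.
Variables (h : R -> \bar R) (a : int).
Hypotheses (mh : measurable_fun setT h) (h0 : forall t, (0 <= h t)%E).

Let esum_translatesE u : (\esum_(n in [set n : int | (n <= a)%R]) h (n%:~R + u)%R =
  \sum_(k <oo) h ((a - k%:Z)%:~R + u)%R)%E.
Proof. exact: esum_int_le_nneseries. Qed.

Let measurable_translate (b : R) : measurable_fun setT (fun u => h (b + u)%R).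
Proof. exact: measurableT_comp mh (measurable_addr b). Qed.

Lemma measurable_esum_int_le_translates (D : set R) : measurable D ->
  measurable_fun D (fun u => \esum_(n in [set n : int | (n <= a)%R]) h (n%:~R + u)%R).
Proof.
move=> mD; under eq_fun do rewrite esum_translatesE.
apply: ge0_emeasurable_sum => [k u _ _|k _]; first exact: h0.
exact: measurable_funS (measurable_translate _).
Qed.

Lemma ge0_integral_esum_int_le_translates :
  (\int[mu]_(u in `]0%R, 1%R])
     (\esum_(n in [set n : int | (n <= a)%R]) h (n%:~R + u)%R) =
   \int[mu]_(t in `]-oo, (a + 1)%:~R]) h t)%E.
Proof.
under eq_integral do rewrite esum_translatesE.
rewrite integral_nneseries //; last first.
  by move=> k; exact: measurable_funS (measurable_translate _).
rewrite ge0_integral_itvNy_int //; apply: eq_eseriesr => k _.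
by rewrite ge0_integral_ocitv_shift // addr0 intrD1.
Qed.

End int_translates.

End lebesgue_translates.

Lemma first_hit_uniq {R : realType} (G : R -> R) (T u : R) n m :
  first_hit G T u n -> first_hit G T u m -> n = m.
Proof.
move=> [Tn ltn] [Tm ltm]; case: (ltgtP n m) => // [nm|mn].
- by have := ltm _ nm; rewrite ltNge Tn.
- by have := ltn _ mn; rewrite ltNge Tm.
Qed.

Lemma oc01_subr_intE {R : realType} (x u : R) : 0 < u <= 1 ->
  x - u \is a Num.int -> u = x + 1 - (Num.ceil x)%:~R.
Proof.
move=> /andP[u_gt0 u_le1] /intrP[k xuk].
have -> : Num.ceil x = k + 1 by apply: ceil_def; rewrite addrK intrD1 -xuk; lra.
by rewrite intrD1 -xuk; ring.
Qed.

Section threshold.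
Context {R : realType}.
Local Notation mu := (@lebesgue_measure R).
Variables (G : R -> R) (T tau : R).
Hypotheses (G_ge0 : forall x, 0 <= G x) (G_nd : {homo G : x y / x <= y}).
Hypotheses (G_lt : forall t, t < tau -> G t < T) (G_ge : forall t, tau < t -> T <= G t).

Lemma first_hit_floor u : tau - u \isn't a Num.int ->
  first_hit G T u (Num.floor (tau - u) + 1).
Proof.
move=> tau_u; split=> [|m]; first by apply: G_ge; rewrite -ltrBlDr floorD1_gt.
rewrite ltzD1 => m_le; apply: G_lt; rewrite -ltrBrDr.
have floor_lt : (Num.floor (tau - u))%:~R < tau - u.
  by rewrite lt_neqAle floor_le andbT -intrEfloor.
by apply: le_lt_trans floor_lt; rewrite ler_int.
Qed.

Lemma run_cost_translates u : 0 < u -> tau - u \isn't a Num.int ->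
  run_cost G T u = (\esum_(n in [set n : int | (n <= Num.ceil tau)%R])
                     ((EFin \o G) \_ `]-oo, (tau + 1)%R]) (n%:~R + u)%R)%E.
Proof.
move=> u_gt0 tau_u; have hit := first_hit_floor tau_u.
set ns := Num.floor (tau - u) + 1 in hit.
have hit_set : [set n | exists ns, first_hit G T u ns /\ n <= ns] = [set n | n <= ns].
  apply/seteqP; split=> n /=; last by exists ns.
  by move=> [ns' [hit' n_le]]; rewrite (first_hit_uniq hit hit').
have le_ns n : (n <= ns) = (n%:~R + u <= tau + 1).
  by rewrite -lerBlDr floor_ge_int intrB; apply/idP/idP => ?; lra.
have ns_le : ns <= Num.ceil tau.
  rewrite /ns lezD1 -(ltr_int R); apply: le_lt_trans (floor_le _) _.
  by apply: lt_le_trans (ceil_ge _); rewrite ltrBlDr ltrDl.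
rewrite /run_cost hit_set.
rewrite -(@setIidr _ [set n : int | n <= Num.ceil tau] [set n | n <= ns]); last first.
  by move=> n /= /le_trans; apply.
rewrite esum_mkcondr; apply: eq_esum => n _.
by rewrite patchE !mem_setE in_itv /= -le_ns unfold_in /=; case: ifP.
Qed.

Lemma cost_threshold :
  cost G T = (\int[mu]_(t in `]-oo, (tau + 1)%R]) (G t)%:E)%E.
Proof.
set h := (EFin \o G) \_ `]-oo, tau + 1].
have mG : measurable_fun setT (EFin \o G).
  by apply/measurable_EFinP; exact: nondecreasing_measurable.
have mh : measurable_fun setT h.
  by apply/(measurable_restrictT _ _).1 => //; exact: measurable_funS mG.
have h_ge0 t : (0 <= h t)%E by rewrite /h patchE; case: ifP; rewrite // lee_fin.
(* the one offset u in ]0, 1] for which a bid falls exactly at tau *)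
rewrite /cost (eq_integral_setD1 (r := tau + 1 - (Num.ceil tau)%:~R)
  (g := fun u => \esum_(n in [set n : int | (n <= Num.ceil tau)%R])
                   h (n%:~R + u)%R)%E) //.
- rewrite ge0_integral_esum_int_le_translates // -integral_mkcondr setIidr //.
  by move=> t /=; rewrite !in_itv /= => /le_trans; apply; rewrite intrD1 lerD2r ceil_ge.
- exact: measurable_esum_int_le_translates.
- move=> u; rewrite inE => -[/=]; rewrite in_itv /= => u01 not_u0.
  apply: run_cost_translates; first by case/andP: u01.
  by apply: contra_notN not_u0 => /(oc01_subr_intE u01) ->.
Qed.

End threshold.

Section sublevel_sup.
Context {R : realType}.
Variables (G : R -> R) (T : R).
Local Notation E := [set t | G t < T].
Hypothesis E_ub : has_ubound E.

Lemma lt_sup_sublevel t : {homo G : x y / x <= y} -> E !=set0 -> t < sup E -> G t < T.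
Proof.
move=> G_nd E_neq0 /(sup_gt E_neq0) [y Ey /ltW/G_nd Gty].
exact: le_lt_trans Gty Ey.
Qed.

Lemma sup_sublevel_lt t : sup E < t -> T <= G t.
Proof. by apply: contraTT; rewrite -ltNge -leNgt => Gt; exact: ub_le_sup. Qed.

End sublevel_sup.

Section bidding_profile.
Context {R : realType}.
Local Notation mu := (@lebesgue_measure R).
Variables (rho chi : R) (G : R -> R).
Hypotheses (G_gt0 : forall x, 0 < G x) (G_nd : {homo G : x y / x <= y}).
Hypothesis G_ge1 : forall x, 0 < x -> 1 <= G x.
Hypothesis G_robust :
  forall x, (\int[mu]_(t in `]-oo, (x + 1)%R]) (G t)%:E <= (rho * G x)%:E)%E.
Hypothesis G_consistent : (\int[mu]_(t in `]-oo, 1%R]) (G t)%:E <= chi%:E)%E.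

Let mG : measurable_fun setT (EFin \o G).
Proof. by apply/measurable_EFinP; exact: nondecreasing_measurable. Qed.

Lemma profile_ge_affine x : 0 <= x -> x + 1 <= rho * G x.
Proof.
move=> x_ge0; rewrite -lee_fin; apply: le_trans (G_robust x).
have -> : (x + 1)%:E = (\int[mu]_(t in `]0%R, (x + 1)%R]) (cst 1%:E) t)%E.
  rewrite integral_cst //= lebesgue_measure_itv /= lte_fin ifT; last lra.
  by rewrite mul1e oppr0 adde0.
apply: (@le_trans _ _ (\int[mu]_(t in `]0%R, (x + 1)%R]) (G t)%:E)%E).
  apply: ge0_le_integral => //; first exact: measurable_funS mG.
  by move=> t /=; rewrite in_itv /= => /andP[t_gt0 _]; rewrite lee_fin G_ge1.
apply: ge0_subset_integral => //; first exact: measurable_funS mG.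
- by move=> t _; rewrite lee_fin ltW.
- by move=> t /=; rewrite !in_itv /= => /andP[].
Qed.

Lemma profile_sublevel_ubound T : 0 < T -> ubound [set t | G t < T] (rho * T).
Proof.
move=> T_gt0 t /= GtT; have rho_gt0 : 0 < rho.
  rewrite -(pmulr_lgt0 _ (G_gt0 0)).
  by apply: lt_le_trans (profile_ge_affine (lexx 0)); rewrite add0r.
have [t_le0|t_gt0] := leP t 0; first by apply: le_trans t_le0 _; rewrite mulr_ge0 // ltW.
have := profile_ge_affine (ltW t_gt0).
have : rho * G t < rho * T by rewrite ltr_pM2l.
lra.
Qed.

Lemma profile_sublevel_neq0 T : 0 < T -> [set t | G t < T] !=set0.
Proof.
move=> T_gt0; apply: contrapT => /forallNP G_geT.
suff : (+oo <= chi%:E)%E by rewrite leye_eq.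
apply: le_trans G_consistent.
have -> : (+oo = \int[mu]_(t in `]-oo, 1%R]) (cst T%:E) t)%E.
  by rewrite integral_cst //= lebesgue_measure_itv /= ltNye addey // gt0_muley ?lte_fin.
apply: ge0_le_integral => //.
- by move=> t _; rewrite lee_fin ltW.
- exact: measurable_funS mG.
- by move=> t _; rewrite lee_fin leNgt; apply/negP => /G_geT.
Qed.

End bidding_profile.

Theorem lemma1 (R : realType) (rho chi : R) (G : R -> R) :
  1 < chi -> chi <= rho -> bidding_profile rho chi G ->
  forall T : R, 0 < T ->
    (ereal_sup [set t%:E | t in [set t : R | (G t < T)%R]] < +oo)%E /\
    cost G T =
      (\int[@lebesgue_measure R]_(t in
          `]-oo, (fine (ereal_sup [set t%:E | t in [set t : R | (G t < T)%R]]) + 1)%R])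
         (G t)%:E)%E.
Proof.
move=> _ _ [G_gt0 [G_nd [_ [_ [G_ge1 [G_robust G_consistent]]]]]] T T_gt0.
have E_neq0 := profile_sublevel_neq0 G_nd G_consistent T_gt0.
have E_ub : has_ubound [set t | G t < T].
  by exists (rho * T); exact: profile_sublevel_ubound.
rewrite ereal_sup_EFin //=; split; first exact: ltry.
apply: cost_threshold => [x|//|t|t]; first exact: ltW.
- exact: lt_sup_sublevel.
- exact: sup_sublevel_lt.
Qed.
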